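(* The classes $\mathsf{WA}$ and $\mathsf{CT}^{\mathsf{obl}}_{\forall\forall}$ are incomparable with respect to inclusion.
   Context: A tgd is $\alpha(\bar x,\bar y)\rightarrow\exists\bar z\,\beta(\bar x,\bar z)$ with $\bar x$ the variables in both body and head. A position is $(R,i)$ with $1\le i\le\mathrm{arity}(R)$. The dependency graph of a finite tgd set $\Sigma$ has positions as vertices and an edge $(R,i)\to(S,j)$ whenever some tgd of $\Sigma$ has a variable $x\in\bar x$ at $(R,i)$ in its body and either $x$ occurs at $(S,j)$ in its head (universal edge) or an existential variable occurs at $(S,j)$ in its head (existential edge). $\mathsf{WA}$ (weakly acyclic) is the class of $\Sigma$ whose dependency graph has no cycle through an existential edge. Oblivious chase: from an instance (finite set of atoms over constants and nulls), repeatedly fire triggers $(\xi,h)$ with $h(\alpha)\subseteq$ current instance (active or not), each trigger at most once, adding $h'(\beta)$ with fresh nulls for existential variables; infinite sequences are fair. $\mathsf{CT}^{\mathsf{obl}}_{\forall\forall}$ is the class of finite tgd sets for which every oblivious chase sequence from every instance is finite. *)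

From Stdlib Require Import List Relations.
Import ListNotations.

(* A relation symbol is a nat; a schema assigns an arity to each symbol. *)
Definition schema := nat -> nat.

(* An atom of a tgd: relation symbol and the list of its variables (nats). *)
Definition vatom := (nat * list nat)%type.

Record tgd := mkTgd { body : list vatom ; head : list vatom }.

Definition vars_of (l : list vatom) : list nat := flat_map snd l.

Definition frontier (t : tgd) (x : nat) : Prop :=
  In x (vars_of (body t)) /\ In x (vars_of (head t)).

Definition existential (t : tgd) (z : nat) : Prop :=
  In z (vars_of (head t)) /\ ~ In z (vars_of (body t)).

Definition wf_vatom (ar : schema) (a : vatom) : Prop :=
  length (snd a) = ar (fst a).

Definition wf_tgd (ar : schema) (t : tgd) : Prop :=
  body t <> [] /\ head t <> [] /\
  (forall a, In a (body t) -> wf_vatom ar a) /\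
  (forall a, In a (head t) -> wf_vatom ar a).

Definition wf_tgds (ar : schema) (Sg : list tgd) : Prop :=
  forall t, In t Sg -> wf_tgd ar t.

(* A position (R, i); argument indices are 0-based here, i < arity R. *)
Definition position := (nat * nat)%type.

Definition univ_edge (Sg : list tgd) (p q : position) : Prop :=
  exists t, In t Sg /\
  exists x R args Q args' i j,
    p = (R, i) /\ q = (Q, j) /\
    In (R, args) (body t) /\ nth_error args i = Some x /\ frontier t x /\
    In (Q, args') (head t) /\ nth_error args' j = Some x.

Definition exist_edge (Sg : list tgd) (p q : position) : Prop :=
  exists t, In t Sg /\
  exists x z R args Q args' i j,
    p = (R, i) /\ q = (Q, j) /\
    In (R, args) (body t) /\ nth_error args i = Some x /\ frontier t x /\
    In (Q, args') (head t) /\ nth_error args' j = Some z /\ existential t z.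

Definition dep_edge (Sg : list tgd) (p q : position) : Prop :=
  univ_edge Sg p q \/ exist_edge Sg p q.

Definition weakly_acyclic (Sg : list tgd) : Prop :=
  ~ exists p q, exist_edge Sg p q /\ clos_refl_trans position (dep_edge Sg) q p.

Definition in_WA (ar : schema) (Sg : list tgd) : Prop :=
  wf_tgds ar Sg /\ weakly_acyclic Sg.

Inductive value := Const (c : nat) | Null (n : nat).

Definition fact := (nat * list value)%type.

(* instances are finite sets of facts, represented by lists *)
Definition instance := list fact.

Definition wf_instance (ar : schema) (I : instance) : Prop :=
  forall f, In f I -> length (snd f) = ar (fst f).

Definition apply_atom (h : nat -> value) (a : vatom) : fact :=
  (fst a, map h (snd a)).

Definition is_trigger (Sg : list tgd) (I : instance) (t : tgd) (h : nat -> value) : Prop :=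
  In t Sg /\ forall a, In a (body t) -> In (apply_atom h a) I.

Definition same_trigger (t : tgd) (h : nat -> value) (t' : tgd) (h' : nat -> value) : Prop :=
  t = t' /\ forall x, In x (vars_of (body t)) -> h x = h' x.

Definition null_occurs (n : nat) (I : instance) : Prop :=
  exists R args, In (R, args) I /\ In (Null n) args.

Definition fresh_extension (t : tgd) (h h' : nat -> value) (I : instance) : Prop :=
  (forall x, In x (vars_of (body t)) -> h' x = h x) /\
  (forall z, existential t z -> exists n, h' z = Null n /\ ~ null_occurs n I) /\
  (forall z1 z2, existential t z1 -> existential t z2 -> h' z1 = h' z2 -> z1 = z2).

(* An infinite oblivious chase sequence of S from I, with instances [inst k],
   fired triggers (tr k, hs k) and extensions hs' k; it is required to be fair. *)
Definition infinite_obl_chase (Sg : list tgd) (I : instance)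
    (inst : nat -> instance) (tr : nat -> tgd) (hs hs' : nat -> nat -> value) : Prop :=
  inst 0 = I /\
  (forall k, is_trigger Sg (inst k) (tr k) (hs k)) /\
  (forall j k, j < k -> ~ same_trigger (tr j) (hs j) (tr k) (hs k)) /\
  (forall k, fresh_extension (tr k) (hs k) (hs' k) (inst k)) /\
  (forall k, inst (S k) = map (apply_atom (hs' k)) (head (tr k)) ++ inst k) /\
  (forall k t h, is_trigger Sg (inst k) t h ->
     exists j, same_trigger t h (tr j) (hs j)).

(* CT^obl_forall-forall: every oblivious chase sequence from every instance
   is finite, i.e. there is no infinite (fair) one. *)
Definition in_CT_obl (ar : schema) (Sg : list tgd) : Prop :=
  wf_tgds ar Sg /\
  forall I, wf_instance ar I ->
  forall inst tr hs hs', ~ infinite_obl_chase Sg I inst tr hs hs'.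

(* Separating WA from CT^obl: the tgd R(x) -> exists z R(z) has no frontier
   variable, hence no edge in its dependency graph, yet every new null
   R(n_k) is the body of a new trigger, so the oblivious chase from R(c)
   runs forever.  Conversely R(x,x) -> exists z R(x,z) has an existential
   self-loop on (R,2), but the atoms it creates are never diagonal, so only
   the finitely many diagonal facts of the start instance can ever fire it,
   and distinct triggers must differ on x. *)
From Stdlib Require Import List Relations Lia Arith.
Import ListNotations.

Lemma pigeonhole_nat {A : Type} (f : nat -> A) (L : list A) :
  (forall j k, j < k -> f j <> f k) -> (forall k, In (f k) L) -> False.
Proof.
  intros Hinj HL.
  assert (Hnodup : NoDup (map f (seq 0 (S (length L))))).
  { apply NoDup_map_NoDup_ForallPairs; [|apply seq_NoDup].
    intros a b _ _ E.
    destruct (Nat.lt_trichotomy a b) as [Hab|[Hab|Hab]]; auto.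
    - exfalso; exact (Hinj a b Hab E).
    - exfalso; exact (Hinj b a Hab (eq_sym E)). }
  assert (Hincl : incl (map f (seq 0 (S (length L)))) L).
  { intros v Hv. apply in_map_iff in Hv. destruct Hv as [k [<- _]]. apply HL. }
  pose proof (NoDup_incl_length Hnodup Hincl) as Hlen.
  rewrite length_map, length_seq in Hlen. lia.
Qed.

Lemma wf_tgds_singleton (ar : schema) (t : tgd) : wf_tgd ar t -> wf_tgds ar [t].
Proof. intros Ht t' [<-|[]]; exact Ht. Qed.

Lemma no_frontier_weakly_acyclic (Sg : list tgd) :
  (forall t x, In t Sg -> ~ frontier t x) -> weakly_acyclic Sg.
Proof.
  intros Hnf [p [q [[t [Ht Hedge]] _]]].
  destruct Hedge as (x & z & R & args & Q & args' & i & j & _ & _ & _ & _ & Hfr & _).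
  exact (Hnf t x Ht Hfr).
Qed.

Definition unary_loop : tgd := mkTgd [(0, [0])] [(0, [1])].

(* [loop_value 0] is the start constant, [loop_value (S k)] the null created
   at step k. *)
Definition loop_value (k : nat) : value :=
  match k with 0 => Const 0 | S n => Null n end.

Fixpoint loop_chase (k : nat) : instance :=
  match k with
  | 0 => [(0, [Const 0])]
  | S n => (0, [Null n]) :: loop_chase n
  end.

Definition loop_trigger (k : nat) : nat -> value := fun _ => loop_value k.

Definition loop_extension (k : nat) : nat -> value :=
  fun v => match v with 0 => loop_value k | _ => Null k end.

Lemma loop_value_inj (j k : nat) : loop_value j = loop_value k -> j = k.
Proof. destruct j, k; simpl; intro E; inversion E; reflexivity. Qed.

Lemma loop_chase_nulls_lt (k R n : nat) (args : list value) :
  In (R, args) (loop_chase k) -> In (Null n) args -> n < k.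
Proof.
  induction k as [|k IH]; simpl; intros Hin Hn.
  - destruct Hin as [E|[]]. inversion E; subst.
    destruct Hn as [E'|[]]. discriminate.
  - destruct Hin as [E|Hin].
    + inversion E; subst. destruct Hn as [E'|[]]. inversion E'. lia.
    + specialize (IH Hin Hn). lia.
Qed.

Lemma loop_chase_values (k : nat) (v : value) :
  In (0, [v]) (loop_chase k) -> exists j, v = loop_value j.
Proof.
  induction k as [|k IH]; simpl; intros Hin.
  - destruct Hin as [E|[]]. inversion E. exists 0. reflexivity.
  - destruct Hin as [E|Hin]; auto. inversion E. exists (S k). reflexivity.
Qed.

Lemma unary_loop_fresh_extension (k : nat) :
  fresh_extension unary_loop (loop_trigger k) (loop_extension k) (loop_chase k).
Proof.
  split; [|split].
  - intros x [<-|[]]. reflexivity.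
  - intros z [Hz _]. simpl in Hz. destruct Hz as [<-|[]].
    exists k. split; [reflexivity|].
    intros [R [args [Hin Hn]]]. apply (loop_chase_nulls_lt _ _ _ _ Hin) in Hn. lia.
  - intros z1 z2 [Hz1 _] [Hz2 _]. simpl in Hz1, Hz2.
    destruct Hz1 as [<-|[]]; destruct Hz2 as [<-|[]]; reflexivity.
Qed.

Lemma unary_loop_infinite_chase :
  infinite_obl_chase [unary_loop] (loop_chase 0) loop_chase
    (fun _ => unary_loop) loop_trigger loop_extension.
Proof.
  split; [reflexivity|]. split; [|split; [|split; [|split]]].
  - intro k. split; [left; reflexivity|].
    intros a [<-|[]]. destruct k; simpl; auto.
  - intros j k Hjk [_ Hsame].
    specialize (Hsame 0 (or_introl eq_refl)).
    apply loop_value_inj in Hsame. lia.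
  - exact unary_loop_fresh_extension.
  - reflexivity.
  - intros k t h [[<-|[]] Hbody].
    destruct (loop_chase_values k (h 0)) as [j Hj].
    { exact (Hbody _ (or_introl eq_refl)). }
    exists j. split; [reflexivity|]. intros x [<-|[]]. exact Hj.
Qed.

Lemma WA_not_CT_obl : exists (ar : schema) (S : list tgd), in_WA ar S /\ ~ in_CT_obl ar S.
Proof.
  exists (fun _ => 1), [unary_loop]. split; [split|].
  - apply wf_tgds_singleton.
    repeat split; try discriminate; intros a [<-|[]]; reflexivity.
  - apply no_frontier_weakly_acyclic.
    intros t x [<-|[]] [Hb Hh]. simpl in Hb, Hh.
    destruct Hb as [<-|[]]; destruct Hh as [E|[]]; discriminate.
  - intros [_ Hterm].
    apply (Hterm (loop_chase 0) ltac:(intros f [<-|[]]; reflexivity) _ _ _ _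
             unary_loop_infinite_chase).
Qed.

Definition diag_tgd : tgd := mkTgd [(0, [0; 0])] [(0, [0; 1])].

Lemma diag_tgd_not_weakly_acyclic : ~ weakly_acyclic [diag_tgd].
Proof.
  intros HW. apply HW. exists (0, 1), (0, 1). split; [|apply rt_refl].
  exists diag_tgd. split; [left; reflexivity|].
  exists 0, 1, 0, [0; 0], 0, [0; 1], 1, 1. simpl.
  repeat split; simpl; try tauto.
  intros [E|[E|[]]]; discriminate.
Qed.

Section DiagChase.

Variables (I : instance) (inst : nat -> instance) (tr : nat -> tgd)
  (hs hs' : nat -> nat -> value).
Hypothesis chase : infinite_obl_chase [diag_tgd] I inst tr hs hs'.

Lemma diag_chase_tgd (k : nat) : tr k = diag_tgd.
Proof. destruct chase as [_ [Htr _]]. destruct (Htr k) as [[E|[]] _]. auto. Qed.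

Lemma diag_chase_body (k : nat) : In (0, [hs k 0; hs k 0]) (inst k).
Proof.
  destruct chase as [_ [Htr _]]. destruct (Htr k) as [_ Hb].
  rewrite diag_chase_tgd in Hb. exact (Hb _ (or_introl eq_refl)).
Qed.

(* The created atom R(h x, n) is diagonal only if the fresh null n equals
   h x, which occurs in the body image and so is not fresh. *)
Lemma diag_chase_diagonal_facts (k : nat) (v : value) :
  In (0, [v; v]) (inst k) -> In (0, [v; v]) I.
Proof.
  destruct chase as [H0 [_ [_ [Hfresh [Hstep _]]]]].
  revert v; induction k as [|k IH]; intros v Hv.
  - rewrite H0 in Hv. exact Hv.
  - rewrite Hstep, diag_chase_tgd in Hv. destruct Hv as [Hv|Hv]; auto.
    destruct (Hfresh k) as [Hext [Hnew _]]. rewrite diag_chase_tgd in Hext, Hnew.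
    destruct (Hnew 1) as [n [Hn Hnot]].
    { split; simpl; [tauto | intros [E|[E|[]]]; discriminate]. }
    unfold apply_atom in Hv; simpl in Hv.
    rewrite Hext in Hv by (simpl; tauto).
    inversion Hv as [[E1 E2]]. exfalso. apply Hnot.
    exists 0, [hs k 0; hs k 0]. split; [apply diag_chase_body|].
    rewrite <- E2, Hn. simpl. auto.
Qed.

Lemma diag_chase_false : False.
Proof.
  destruct chase as [_ [_ [Hdistinct _]]].
  apply (pigeonhole_nat (fun k => hs k 0) (map (fun f => hd (Const 0) (snd f)) I)).
  - intros j k Hjk E. apply (Hdistinct j k Hjk).
    rewrite !diag_chase_tgd. split; [reflexivity|].
    intros x Hx. simpl in Hx. destruct Hx as [<-|[<-|[]]]; exact E.
  - intro k. apply in_map_iff.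
    exists (0, [hs k 0; hs k 0]). split; [reflexivity|].
    apply (diag_chase_diagonal_facts k), diag_chase_body.
Qed.

End DiagChase.

Lemma CT_obl_not_WA : exists (ar : schema) (S : list tgd), in_CT_obl ar S /\ ~ in_WA ar S.
Proof.
  exists (fun _ => 2), [diag_tgd]. split; [split|].
  - apply wf_tgds_singleton.
    repeat split; try discriminate; intros a [<-|[]]; reflexivity.
  - intros I _ inst tr hs hs' chase. exact (diag_chase_false _ _ _ _ _ chase).
  - intros [_ HW]. exact (diag_tgd_not_weakly_acyclic HW).
Qed.

Theorem proposition6 :
  (exists (ar : schema) (S : list tgd), in_WA ar S /\ ~ in_CT_obl ar S) /\
  (exists (ar : schema) (S : list tgd), in_CT_obl ar S /\ ~ in_WA ar S).
Proof. split; [exact WA_not_CT_obl | exact CT_obl_not_WA]. Qed.
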